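(* For any function $f^*:\mathbb R\rightarrow\mathbb R$, any (nonempty) finite set $\mathcal X\subset\mathbb R$, and any compact interval $\mathcal{I} \subset\mathbb R$ containing $\mathcal X$, there exists a $\textsc{ReLU}$ network $f:\mathbb R\rightarrow\mathbb R$ of width $2$ such that $f(x)=f^*(x)$ for all $x\in\mathcal X$ and $f(\mathcal I)\subset\big[\min f^*(\mathcal X),\max f^*(\mathcal X)\big]$.
   Context: A $\textsc{ReLU}$ network is $t_L\circ\sigma_{L-1}\circ\cdots\circ\sigma_1\circ t_1$ with affine maps $t_\ell:\mathbb R^{d_{\ell-1}}\to\mathbb R^{d_\ell}$ and $\sigma_\ell$ the coordinatewise $\textsc{ReLU}$ $x\mapsto\max\{x,0\}$; its width is $\max\{d_1,\dots,d_{L-1}\}$ and its depth is arbitrary. *)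

From HB Require Import structures.
From mathcomp Require Import all_boot all_order all_algebra.
From mathcomp Require Import reals.
Set Implicit Arguments. Unset Strict Implicit. Unset Printing Implicit Defensive.
Import Order.TTheory GRing.Theory Num.Theory.
Local Open Scope ring_scope.

Section ReLUNet.
Variable R : realType.

(* A ReLU network t_L o sigma_{L-1} o ... o sigma_1 o t_1 from R^m to R^n.
   [Affine W b] is a single affine map x |-> W x + b (L = 1);
   [Layer W b N] is N o sigma o (x |-> W x + b), where the hidden layer
   has dimension k. *)
Inductive relu_net : nat -> nat -> Type :=
| Affine (m n : nat) (W : 'M[R]_(n, m)) (b : 'cV[R]_n) : relu_net m n
| Layer (m k n : nat) (W : 'M[R]_(k, m)) (b : 'cV[R]_k) (N : relu_net k n)
    : relu_net m n.

Definition relu_vec (k : nat) (v : 'cV[R]_k) : 'cV[R]_k :=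
  map_mx (fun t => Num.max t 0) v.

Fixpoint eval_net (m n : nat) (N : relu_net m n) : 'cV[R]_m -> 'cV[R]_n :=
  match N in relu_net m n return 'cV[R]_m -> 'cV[R]_n with
  | Affine _ _ W b => fun x => W *m x + b
  | Layer _ _ _ W b N' => fun x => eval_net N' (relu_vec (W *m x + b))
  end.

Fixpoint width (m n : nat) (N : relu_net m n) : nat :=
  match N with
  | Affine _ _ _ _ => 0%N
  | Layer _ k _ _ _ N' => maxn k (width N')
  end.

Definition net_fun (N : relu_net 1 1) (x : R) : R :=
  eval_net N (const_mx x) ord0 ord0.

End ReLUNet.

Definition seq_min (R : realType) (f : R -> R) (s : seq R) : R :=
  foldr (fun y acc => Num.min (f y) acc) (f (head 0 s)) s.
Definition seq_max (R : realType) (f : R -> R) (s : seq R) : R :=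
  foldr (fun y acc => Num.max (f y) acc) (f (head 0 s)) s.

(* A width-2 ReLU network can carry a position t >= 0 and an accumulator A.
   The layer (t, A) |-> (relu (t - m), relu (s t + A)) moves the breakpoint m
   to 0 and adds the linear piece s t to A; as long as A stays above a large
   enough offset B, the second ReLU acts as the identity.  Peeling off the
   smallest data point one layer at a time, with the slope that fits the data
   there, stores an interpolant of f* in the accumulator.  A final width-1
   block clamps the result into [min f*(X), max f*(X)], which bounds the
   network on all of R. *)

From mathcomp Require Import all_boot all_order all_algebra.
From mathcomp Require Import reals.
From mathcomp Require Import lra.
Set Implicit Arguments. Unset Strict Implicit. Unset Printing Implicit Defensive.
Import Order.TTheory GRing.Theory Num.Theory.
Local Open Scope ring_scope.

Lemma relu_clamp (R : realDomainType) (z lo hi : R) : lo <= hi ->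
  hi - Num.max (hi - lo - Num.max (z - lo) 0) 0 = Num.min (Num.max z lo) hi.
Proof.
move=> lo_le_hi; case: (leP z lo) => [z_le_lo | lo_lt_z].
  rewrite (max_r (_ : z - lo <= 0)) ?subr_le0 // (min_l lo_le_hi).
  by rewrite max_l; lra.
rewrite (max_l (_ : 0 <= z - lo)) ?subr_ge0 ?ltW //.
case: (leP z hi) => [z_le_hi | hi_lt_z].
  by rewrite max_l; lra.
by rewrite max_r; lra.
Qed.

Section Interpolation.
Variable R : realType.
Implicit Types (f y : R -> R) (s T : seq R).

Lemma seq_min_le f s x : x \in s -> seq_min f s <= f x.
Proof.
rewrite /seq_min; move: (f (head 0 s)) => i; elim: s => //= z s IH.
by rewrite in_cons ge_min => /predU1P [-> | /IH ->]; rewrite ?lexx ?orbT.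
Qed.

Lemma seq_max_ge f s x : x \in s -> f x <= seq_max f s.
Proof.
rewrite /seq_max; move: (f (head 0 s)) => i; elim: s => //= z s IH.
by rewrite in_cons le_max => /predU1P [-> | /IH ->]; rewrite ?lexx ?orbT.
Qed.

Lemma seq_min_mem f s : s != [::] -> exists2 x, x \in s & seq_min f s = f x.
Proof.
case: s => // z s _; rewrite /seq_min /=.
have [x xs ->] : exists2 x, x \in z :: s &
    foldr (fun u acc => Num.min (f u) acc) (f z) s = f x.
  elim: s => /= [|w s [x xs ->]]; first by exists z; rewrite ?mem_head.
  rewrite minEle; case: ifP => _; first by exists w; rewrite ?inE ?eqxx ?orbT.
  by exists x => //; rewrite !inE in xs *; case/orP: xs => ->; rewrite ?orbT.
by rewrite minEle; case: ifP => _; [exists z; rewrite ?mem_head | exists x].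
Qed.

Definition hinge_step (p q : R * R) : R * R :=
  (Num.max (p.1 - q.1) 0, Num.max (q.2 * p.1 + p.2) 0).

Definition hinge_steps (p : R * R) (qs : seq (R * R)) : R * R :=
  foldl hinge_step p qs.

Definition hinges_interpolate (qs : seq (R * R)) (B : R) T y : Prop :=
  0 <= B /\ forall t A, t \in 0 :: T -> B <= A ->
    hinge_steps (t, A) qs = (0, A + (y t - y 0)).

Lemma hinges_interpolate_nil y : hinges_interpolate [::] 0 [::] y.
Proof. by split => // t A; rewrite inE => /eqP -> _; rewrite subrr addr0. Qed.

Lemma hinges_interpolate_cons T y m sg qs B :
  m \in T -> 0 < m -> (forall t, t \in T -> m <= t) -> sg * m = y m - y 0 ->
  hinges_interpolate qs B [seq t - m | t <- T & m < t]
    (fun u => y (u + m) - sg * (u + m)) ->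
  hinges_interpolate ((m, sg) :: qs) (B + seq_max (fun t => `|sg * t|) T) T y.
Proof.
move=> mT m_gt0 m_min sg_m [B_ge0 interp].
(* The offset C keeps sg t + A >= B >= 0, so the accumulator's ReLU is inactive. *)
set C := seq_max _ T.
have C_ge0 : 0 <= C := le_trans (normr_ge0 (sg * m)) (seq_max_ge _ mT).
split=> [|t A tT BA]; first by rewrite addr_ge0.
have sg_t_ge : - C <= sg * t.
  move: tT; rewrite inE => /predU1P [-> | /(seq_max_ge (fun t => `|sg * t|))].
    by rewrite mulr0 oppr_le0.
  exact: lerNnormlW.
have shifted : B <= sg * t + A by lra.
rewrite /hinge_steps /= -/(hinge_steps _ _) /hinge_step /=.
rewrite (max_l (le_trans B_ge0 shifted)).
case: (leP t m) => [t_le_m | m_lt_t].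
  rewrite max_r ?subr_le0 // interp ?mem_head // add0r sg_m subrr addr0.
  have [->|t_ne0] := eqVneq t 0; first by rewrite mulr0 subrr add0r addr0.
  have /eqP -> : t == m.
    by rewrite eq_le t_le_m m_min //; move: tT; rewrite inE (negbTE t_ne0).
  by rewrite sg_m addrC.
rewrite max_l ?subr_ge0 ?ltW // interp //; last first.
  have t_gt0 : 0 < t := lt_trans m_gt0 m_lt_t.
  have {}tT : t \in T by move: tT; rewrite in_cons gt_eqF.
  by apply/predU1P; right; apply/mapP; exists t; rewrite // mem_filter m_lt_t.
by rewrite add0r sg_m subrK; congr (_, _); lra.
Qed.

Lemma hinges_interpolate_exists T y :
  (forall t, t \in T -> 0 < t) -> exists qs B, hinges_interpolate qs B T y.
Proof.
have [n] := ubnP (size T); elim: n => // n IH in T y *.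
rewrite ltnS => T_small T_pos.
have [->|T_nnil] := eqVneq T [::]; first by exists [::], 0; apply: hinges_interpolate_nil.
have [m mT m_def] := seq_min_mem id T_nnil.
have m_min t : t \in T -> m <= t by move/(seq_min_le id); rewrite m_def.
set T' := [seq t - m | t <- T & m < t].
have T'_small : (size T' < n)%N.
  rewrite size_map size_filter (leq_trans _ T_small) // ltn_neqAle count_size.
  by rewrite -all_count andbT; apply/negP => /allP /(_ m mT); rewrite ltxx.
have T'_pos t : t \in T' -> 0 < t.
  by case/mapP=> u; rewrite mem_filter => /andP [m_lt_u _] ->; rewrite subr_gt0.
set sg := (y m - y 0) / m.
have [qs [B interp]] := IH T' (fun u => y (u + m) - sg * (u + m)) T'_small T'_pos.
exists ((m, sg) :: qs), (B + seq_max (fun t => `|sg * t|) T).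
apply: hinges_interpolate_cons interp => //; first exact: T_pos.
by rewrite divfK ?gt_eqF ?T_pos.
Qed.

Definition vec2 (p : R * R) : 'cV[R]_2 := \col_i (if i == ord0 then p.1 else p.2).

Lemma relu_vec2 p : relu_vec (vec2 p) = vec2 (Num.max p.1 0, Num.max p.2 0).
Proof. by apply/matrixP => i j; rewrite !mxE; case: ifP. Qed.

Definition hinge_mx (s : R) : 'M[R]_2 :=
  \matrix_(i, j) if i == ord0 then (j == ord0)%:R else if j == ord0 then s else 1.

Lemma hinge_layerE p q :
  relu_vec (hinge_mx q.2 *m vec2 p + vec2 (- q.1, 0)) = vec2 (hinge_step p q).
Proof.
suff -> : hinge_mx q.2 *m vec2 p + vec2 (- q.1, 0) = vec2 (p.1 - q.1, q.2 * p.1 + p.2).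
  exact: relu_vec2.
apply/matrixP => i j; rewrite !mxE big_ord_recl big_ord1 !mxE /=.
by case: i => [[|[|//]] ?] /=; rewrite ?mul1r ?mul0r ?addr0 ?mulr1.
Qed.

Definition hinge_net n (qs : seq (R * R)) (N : relu_net R 2 n) : relu_net R 2 n :=
  foldr (fun q N => Layer (hinge_mx q.2) (vec2 (- q.1, 0)) N) N qs.

Lemma eval_hinge_net n qs (N : relu_net R 2 n) p :
  eval_net (hinge_net qs N) (vec2 p) = eval_net N (vec2 (hinge_steps p qs)).
Proof. by elim: qs p => //= q qs IH p; rewrite hinge_layerE IH. Qed.

Lemma width_hinge_net n qs (N : relu_net R 2 n) :
  (width (hinge_net qs N) <= maxn 2 (width N))%N.
Proof. by elim: qs => /= [|q qs IH]; rewrite ?leq_maxr // geq_max leq_maxl. Qed.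

Definition clamp_net (d lo hi : R) : relu_net R 2 1 :=
  Layer (\row_j (j != ord0)%:R) (const_mx (- (d + lo)))
    (Layer (const_mx (-1) : 'M_1) (const_mx (hi - lo))
      (Affine (const_mx (-1) : 'M_1) (const_mx hi))).

Lemma eval_clamp_net d lo hi p : lo <= hi ->
  eval_net (clamp_net d lo hi) (vec2 p) ord0 ord0 = Num.min (Num.max (p.2 - d) lo) hi.
Proof.
move=> lo_le_hi; rewrite -relu_clamp //.
rewrite /= !(mxE, big_ord_recl, big_ord0) /=.
rewrite mul0r mul1r add0r !addr0 !mulN1r addrC; congr (_ - Num.max _ 0).
by rewrite addrC opprD addrA.
Qed.

Definition input_net (c B : R) (N : relu_net R 2 1) : relu_net R 1 1 :=
  Layer (\col_i (i == ord0)%:R) (vec2 (- c, B)) N.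

Lemma net_fun_input_net c B N x :
  net_fun (input_net c B N) x =
  eval_net N (vec2 (Num.max (x - c) 0, Num.max B 0)) ord0 ord0.
Proof.
rewrite /net_fun /=.
suff -> : \col_i (i == ord0)%:R *m const_mx x + vec2 (- c, B) = vec2 (x - c, B).
  by rewrite relu_vec2.
apply/matrixP => i j; rewrite !(mxE, big_ord_recl, big_ord0) /=.
by case: ifP => _; rewrite ?mul1r ?mul0r ?add0r ?addr0.
Qed.

End Interpolation.

Theorem lemma5 (R : realType) (fstar : R -> R) (X : seq R) (a b : R) :
  X != [::] -> a <= b -> (forall x, x \in X -> a <= x <= b) ->
  exists N : relu_net R 1 1,
    width N = 2%N /\
    (forall x, x \in X -> net_fun N x = fstar x) /\
    (forall x, a <= x <= b ->
       seq_min fstar X <= net_fun N x <= seq_max fstar X).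
Proof.
move=> X_nnil _ _.
set lo := seq_min fstar X; set hi := seq_max fstar X.
have [x0 x0X _] := seq_min_mem fstar X_nnil.
have lo_le_hi : lo <= hi := le_trans (seq_min_le fstar x0X) (seq_max_ge fstar x0X).
set c := seq_min id X - 1.
have c_lt x : x \in X -> c < x by move/(seq_min_le id); rewrite /c /=; lra.
have T_pos t : t \in [seq x - c | x <- X] -> 0 < t.
  by case/mapP=> x xX ->; rewrite subr_gt0 c_lt.
have [qs [B [B_ge0 interp]]] := hinges_interpolate_exists (fun t => fstar (t + c)) T_pos.
pose N := input_net c B (hinge_net qs (clamp_net (B - fstar c) lo hi)).
have N_val x : net_fun N x =
    Num.min (Num.max ((hinge_steps (Num.max (x - c) 0, B) qs).2 - (B - fstar c)) lo) hi.
  by rewrite net_fun_input_net eval_hinge_net eval_clamp_net // (max_l B_ge0).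
exists N; split; [|split] => [|x xX|x _]; rewrite ?N_val.
- by apply/maxn_idPl; exact: width_hinge_net.
- have xc_ge0 : 0 <= x - c by rewrite subr_ge0 ltW ?c_lt.
  rewrite (max_l xc_ge0) interp //; last first.
    by apply/predU1P; right; apply/mapP; exists x.
  rewrite /= subrK add0r (_ : _ - _ = fstar x); last by lra.
  by rewrite max_l ?min_l ?seq_min_le ?seq_max_ge.
- by rewrite le_min ge_min le_max !lexx lo_le_hi !orbT.
Qed.
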